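(* Let $A$ be a right faithful Banach algebra. If $A^* = \langle A^*\triangle A^{**}\rangle$, then the norm of $A$ is equivalent on $A$ to its right multiplier norm $\|a\|_{r}=\sup_{\|x\|_A\le 1}\|xa\|_A$. Symmetrically, if $A$ is left faithful and $A^* = \langle A^{**}\square A^*\rangle$, then the norm of $A$ is equivalent to its left multiplier norm $\|a\|_{l}=\sup_{\|x\|_A\le 1}\|ax\|_A$.
   Context: Arens-type module actions: for a Banach algebra $A$, $a,b\in A$, $f\in A^*$, $m\in A^{**}$, define $f\square a\in A^*$ by $\langle f\square a,b\rangle=\langle f,ab\rangle$ and $m\square f\in A^*$ by $\langle m\square f,a\rangle=\langle m,f\square a\rangle$; define $a\triangle f\in A^*$ by $\langle a\triangle f,b\rangle=\langle f,ba\rangle$ and $f\triangle m\in A^*$ by $\langle f\triangle m,a\rangle=\langle m,a\triangle f\rangle$. $\langle A^*\triangle A^{**}\rangle$ denotes the linear span of $\{f\triangle m: f\in A^*, m\in A^{**}\}$, and similarly for $\langle A^{**}\square A^*\rangle$. $A$ is right faithful if $xa=0$ for all $x\in A$ implies $a=0$ (so that $a\mapsto$ right multiplication by $a$ embeds $A$ injectively into its right multiplier algebra, with norm $\|\cdot\|_r$); left faithful is defined symmetrically. *)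

From Stdlib Require Import Reals List.
Open Scope R_scope.

Record C := mkC { re : R; im : R }.
Definition C0 : C := mkC 0 0.
Definition C1 : C := mkC 1 0.
Definition Cadd (z w : C) : C := mkC (re z + re w) (im z + im w).
Definition Copp (z : C) : C := mkC (- re z) (- im z).
Definition Cmul (z w : C) : C :=
  mkC (re z * re w - im z * im w) (re z * im w + im z * re w).
Definition Cmod (z : C) : R := sqrt (re z ^ 2 + im z ^ 2).

Record BanachAlgebra := {
  car :> Type;
  add : car -> car -> car;
  zero : car;
  opp : car -> car;
  scal : C -> car -> car;
  mul : car -> car -> car;
  norm : car -> R;
  add_assoc : forall a b c, add a (add b c) = add (add a b) c;
  add_comm : forall a b, add a b = add b a;
  add_zero : forall a, add a zero = a;
  add_opp : forall a, add a (opp a) = zero;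
  scal_one : forall a, scal C1 a = a;
  scal_assoc : forall z w a, scal z (scal w a) = scal (Cmul z w) a;
  scal_addl : forall z w a, scal (Cadd z w) a = add (scal z a) (scal w a);
  scal_addr : forall z a b, scal z (add a b) = add (scal z a) (scal z b);
  mul_assoc : forall a b c, mul a (mul b c) = mul (mul a b) c;
  mul_addl : forall a b c, mul (add a b) c = add (mul a c) (mul b c);
  mul_addr : forall a b c, mul a (add b c) = add (mul a b) (mul a c);
  mul_scall : forall z a b, mul (scal z a) b = scal z (mul a b);
  mul_scalr : forall z a b, mul a (scal z b) = scal z (mul a b);
  norm_nonneg : forall a, 0 <= norm a;
  norm_eq0 : forall a, norm a = 0 -> a = zero;
  norm_triangle : forall a b, norm (add a b) <= norm a + norm b;
  norm_scal : forall z a, norm (scal z a) = Cmod z * norm a;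
  norm_submult : forall a b, norm (mul a b) <= norm a * norm b;
  complete : forall u : nat -> car,
    (forall eps, eps > 0 -> exists N, forall n m, (n >= N)%nat -> (m >= N)%nat ->
        norm (add (u n) (opp (u m))) < eps) ->
    exists l, forall eps, eps > 0 -> exists N, forall n, (n >= N)%nat ->
        norm (add (u n) (opp l)) < eps
}.

Section Duals.
Variable A : BanachAlgebra.

Definition in_dual (f : A -> C) : Prop :=
  (forall a b, f (add A a b) = Cadd (f a) (f b)) /\
  (forall z a, f (scal A z a) = Cmul z (f a)) /\
  (exists M, forall a, Cmod (f a) <= M * norm A a).

(* "K bounds f", i.e. ||f|| <= K for the dual norm *)
Definition dual_bound (f : A -> C) (K : R) : Prop :=
  0 <= K /\ forall a, Cmod (f a) <= K * norm A a.

Definition in_bidual (m : (A -> C) -> C) : Prop :=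
  (forall f g, in_dual f -> in_dual g ->
     m (fun a => Cadd (f a) (g a)) = Cadd (m f) (m g)) /\
  (forall z f, in_dual f -> m (fun a => Cmul z (f a)) = Cmul z (m f)) /\
  (exists M, forall f K, in_dual f -> dual_bound f K -> Cmod (m f) <= M * K).

(* Arens-type actions *)
Definition sq_fa (f : A -> C) (a : A) : A -> C := fun b => f (mul A a b).
Definition sq_mf (m : (A -> C) -> C) (f : A -> C) : A -> C :=
  fun a => m (sq_fa f a).
Definition tr_af (a : A) (f : A -> C) : A -> C := fun b => f (mul A b a).
Definition tr_fm (f : A -> C) (m : (A -> C) -> C) : A -> C :=
  fun a => m (tr_af a f).

Definition Csum (l : list C) : C := fold_right Cadd C0 l.

Definition dual_spanned_by_tr : Prop :=
  forall f, in_dual f ->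
    exists l : list (C * (A -> C) * ((A -> C) -> C)),
      (forall c g m, In (c, g, m) l -> in_dual g /\ in_bidual m) /\
      forall a, f a = Csum (map (fun t => let '(c, g, m) := t in
                                 Cmul c (tr_fm g m a)) l).

Definition dual_spanned_by_sq : Prop :=
  forall f, in_dual f ->
    exists l : list (C * ((A -> C) -> C) * (A -> C)),
      (forall c m g, In (c, m, g) l -> in_bidual m /\ in_dual g) /\
      forall a, f a = Csum (map (fun t => let '(c, m, g) := t in
                                 Cmul c (sq_mf m g a)) l).

Definition right_faithful : Prop :=
  forall a, (forall x, mul A x a = zero A) -> a = zero A.
Definition left_faithful : Prop :=
  forall a, (forall x, mul A a x = zero A) -> a = zero A.

Definition is_rnorm (a : A) (s : R) : Prop :=
  is_lub (fun r => exists x, norm A x <= 1 /\ r = norm A (mul A x a)) s.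
Definition is_lnorm (a : A) (s : R) : Prop :=
  is_lub (fun r => exists x, norm A x <= 1 /\ r = norm A (mul A a x)) s.

End Duals.

(** The upper
    bound is submultiplicativity.  For the lower bound, note that
    [(g tr m)(a) = m (a tr g)] and [||a tr g|| <= ||g|| ||a||_r], so every
    [f] in [A^*] satisfies [|f a| <= K_f ||a||_r]: the elements [a / ||a||_r]
    are weak*-bounded in [A^**], and the uniform boundedness principle bounds
    them in norm.  We prove that principle for this family by a gliding hump
    argument, which needs norming functionals, i.e. Hahn-Banach.

    The left-hand statement is the right-hand
    one for the opposite algebra. *)

From Stdlib Require Import Reals List Lra Classical ClassicalEpsilon.
From Coquelicot Require Import Hierarchy Series.
From mathcomp Require classical_sets boolp.
(* Imported last so that the complex numbers [C] of Defs shadow the binomial [C] of Reals. *)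
From Pilot Require Import Defs.
Open Scope R_scope.

Lemma C_eq (z w : C) : re z = re w -> im z = im w -> z = w.
Proof. destruct z, w; simpl; intros; subst; reflexivity. Qed.

Lemma Cmod_nonneg z : 0 <= Cmod z.
Proof. apply sqrt_pos. Qed.

Lemma Cmod_real t : Cmod (mkC t 0) = Rabs t.
Proof. unfold Cmod; simpl. rewrite <- sqrt_Rsqr_abs. f_equal. unfold Rsqr. ring. Qed.

Lemma Cmod_mul z w : Cmod (Cmul z w) = Cmod z * Cmod w.
Proof.
  unfold Cmod. rewrite <- sqrt_mult by nra. f_equal. simpl. ring.
Qed.

Lemma Rabs_re_le z : Rabs (re z) <= Cmod z.
Proof.
  unfold Cmod. rewrite <- sqrt_Rsqr_abs. apply sqrt_le_1_alt. unfold Rsqr. nra.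
Qed.

Lemma Rabs_im_le z : Rabs (im z) <= Cmod z.
Proof.
  unfold Cmod. rewrite <- sqrt_Rsqr_abs. apply sqrt_le_1_alt. unfold Rsqr. nra.
Qed.

Lemma Cmod_le_sum z : Cmod z <= Rabs (re z) + Rabs (im z).
Proof.
  pose proof (Rabs_pos (re z)); pose proof (Rabs_pos (im z)).
  unfold Cmod. rewrite <- (sqrt_Rsqr (Rabs (re z) + Rabs (im z))) by lra.
  apply sqrt_le_1_alt. unfold Rsqr.
  rewrite <- (pow2_abs (re z)), <- (pow2_abs (im z)). nra.
Qed.

Section RealScaling.
Variable A : BanachAlgebra.

(* Multiplication by the real scalar t; the Hahn-Banach argument is real-linear. *)
Definition rscal (t : R) (x : A) : A := scal A (mkC t 0) x.

Lemma add_zero_l x : add A (zero A) x = x.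
Proof. rewrite add_comm. apply add_zero. Qed.

Lemma add_cancel (x y : A) : add A x y = x -> y = zero A.
Proof.
  intro H.
  assert (E : add A (opp A x) (add A x y) = add A (opp A x) x) by (rewrite H; reflexivity).
  rewrite add_assoc, (add_comm A (opp A x) x), add_opp, add_zero_l in E. exact E.
Qed.

Lemma add_swap4 x y z w :
  add A (add A x y) (add A z w) = add A (add A x z) (add A y w).
Proof. rewrite <- !add_assoc. f_equal. rewrite !add_assoc. f_equal. apply add_comm. Qed.

Lemma rscal_plus s t x : rscal (s + t) x = add A (rscal s x) (rscal t x).
Proof. unfold rscal. rewrite <- scal_addl. f_equal. apply C_eq; simpl; ring. Qed.

Lemma rscal_rscal s t x : rscal s (rscal t x) = rscal (s * t) x.
Proof. unfold rscal. rewrite scal_assoc. f_equal. apply C_eq; simpl; ring. Qed.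

Lemma rscal_add s x y : rscal s (add A x y) = add A (rscal s x) (rscal s y).
Proof. apply scal_addr. Qed.

Lemma rscal1 x : rscal 1 x = x.
Proof. apply scal_one. Qed.

Lemma rscal0 x : rscal 0 x = zero A.
Proof. apply (add_cancel (rscal 0 x)). rewrite <- rscal_plus. f_equal; ring. Qed.

Lemma add_rscal_opp x : add A x (rscal (-1) x) = zero A.
Proof.
  rewrite <- (rscal1 x) at 1. rewrite <- rscal_plus. replace (1 + -1) with 0 by ring.
  apply rscal0.
Qed.

Lemma add_cancel_l x v : add A (add A x v) (rscal (-1) x) = v.
Proof. rewrite (add_comm A x v), <- add_assoc, add_rscal_opp, add_zero. reflexivity. Qed.

Lemma norm_rscal t x : norm A (rscal t x) = Rabs t * norm A x.
Proof. unfold rscal. rewrite norm_scal, Cmod_real. reflexivity. Qed.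

Lemma norm_zero : norm A (zero A) = 0.
Proof. rewrite <- (rscal0 (zero A)), norm_rscal, Rabs_R0. ring. Qed.

Lemma mul_zero_l x : mul A (zero A) x = zero A.
Proof. rewrite <- (rscal0 x) at 1. unfold rscal. rewrite mul_scall. apply rscal0. Qed.

End RealScaling.

Section RightMultiplierNorm.
Variable A : BanachAlgebra.

Lemma rnorm_exists (a : A) : exists s, is_rnorm A a s.
Proof.
  destruct (completeness (fun r => exists x, norm A x <= 1 /\ r = norm A (mul A x a)))
    as [s Hs].
  - exists (norm A a). intros r [x [Hx ->]].
    pose proof (norm_submult A x a). pose proof (norm_nonneg A a).
    pose proof (norm_nonneg A x). nra.
  - exists (norm A (mul A (zero A) a)), (zero A). rewrite norm_zero. split; [lra|reflexivity].
  - exists s; exact Hs.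
Qed.

Lemma rnorm_nonneg (a : A) s : is_rnorm A a s -> 0 <= s.
Proof.
  intros [Hub _]. apply Rle_trans with (norm A (mul A (zero A) a)); [apply norm_nonneg|].
  apply Hub. exists (zero A). rewrite norm_zero. split; [lra|reflexivity].
Qed.

Lemma rnorm_le_norm (a : A) s : is_rnorm A a s -> s <= norm A a.
Proof.
  intros [_ Hlub]. apply Hlub. intros r [x [Hx ->]].
  pose proof (norm_submult A x a). pose proof (norm_nonneg A a).
  pose proof (norm_nonneg A x). nra.
Qed.

Lemma rnorm_bound (a : A) s : is_rnorm A a s ->
  forall x, norm A (mul A x a) <= s * norm A x.
Proof.
  intros Hs x. destruct (Req_dec (norm A x) 0) as [E|E].
  - apply norm_eq0 in E. subst x. rewrite mul_zero_l, norm_zero. lra.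
  - pose proof (norm_nonneg A x) as Hn.
    set (k := / norm A x).
    assert (Hk : 0 < k) by (apply Rinv_0_lt_compat; lra).
    assert (Hunit : norm A (rscal A k x) = 1).
    { rewrite norm_rscal, Rabs_right by lra. unfold k. field. lra. }
    assert (Hle : norm A (mul A (rscal A k x) a) <= s).
    { apply (proj1 Hs). exists (rscal A k x). split; [lra|reflexivity]. }
    unfold rscal in Hle. rewrite mul_scall in Hle. fold (rscal A k (mul A x a)) in Hle.
    rewrite norm_rscal, Rabs_right in Hle by lra.
    apply (Rmult_le_compat_l (norm A x)) in Hle; [|lra].
    unfold k in Hle. rewrite <- Rmult_assoc, Rinv_r, Rmult_1_l in Hle; lra.
Qed.

(** Every functional in the span of [A^* tr A^**] is dominated by the right
    multiplier norm: [g tr m] evaluated at [a] is [m] applied to [a tr g], whose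
    dual norm is at most [||g|| ||a||_r]. *)

Lemma in_dual_bound (g : A -> C) : in_dual A g ->
  exists B, 0 <= B /\ forall y, Cmod (g y) <= B * norm A y.
Proof.
  intros [_ [_ [M HM]]]. exists (Rmax M 0). split; [apply Rmax_r|].
  intros y. eapply Rle_trans; [apply HM|].
  apply Rmult_le_compat_r; [apply norm_nonneg|apply Rmax_l].
Qed.

Lemma tr_af_dual (a : A) g : in_dual A g -> in_dual A (tr_af A a g).
Proof.
  intros Hg. destruct (in_dual_bound g Hg) as [B [HB HBy]].
  destruct Hg as [Hadd [Hsc _]]. unfold tr_af. split; [|split].
  - intros x y. rewrite mul_addl. apply Hadd.
  - intros z x. rewrite mul_scall. apply Hsc.
  - exists (B * norm A a). intros x. eapply Rle_trans; [apply HBy|].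
    pose proof (norm_submult A x a). pose proof (norm_nonneg A a).
    pose proof (norm_nonneg A x). nra.
Qed.

Lemma tr_af_dual_bound (a : A) g B s : is_rnorm A a s -> 0 <= B ->
  (forall y, Cmod (g y) <= B * norm A y) -> dual_bound A (tr_af A a g) (B * s).
Proof.
  intros Hs HB HBy. pose proof (rnorm_nonneg a s Hs).
  split; [nra|]. intros x. unfold tr_af. eapply Rle_trans; [apply HBy|].
  pose proof (rnorm_bound a s Hs x). pose proof (norm_nonneg A x). nra.
Qed.

Lemma tr_term_dominated c g m : in_dual A g -> in_bidual A m ->
  exists K, 0 <= K /\ forall a s, is_rnorm A a s -> Cmod (Cmul c (tr_fm A g m a)) <= K * s.
Proof.
  intros Hg [_ [_ [M HM]]]. destruct (in_dual_bound g Hg) as [B [HB HBy]].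
  exists (Cmod c * Rabs M * B). pose proof (Cmod_nonneg c). pose proof (Rabs_pos M).
  split; [apply Rmult_le_pos; [apply Rmult_le_pos|]; assumption|].
  intros a s Hs. rewrite Cmod_mul. unfold tr_fm.
  pose proof (rnorm_nonneg a s Hs).
  pose proof (HM _ _ (tr_af_dual a g Hg) (tr_af_dual_bound a g B s Hs HB HBy)) as Hm.
  pose proof (Rle_abs M). assert (0 <= B * s) by nra.
  assert (Cmod (m (tr_af A a g)) <= Rabs M * (B * s)) by nra. nra.
Qed.

Lemma span_dominated_by_rnorm : dual_spanned_by_tr A -> forall f, in_dual A f ->
  exists K, 0 <= K /\ forall a s, is_rnorm A a s -> Rabs (re (f a)) <= K * s.
Proof.
  intros Hsp f Hf. destruct (Hsp f Hf) as [l [Hl Hfa]].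
  enough (Hsum : exists K, 0 <= K /\ forall a s, is_rnorm A a s ->
    Rabs (re (Csum (map (fun t => let '(c, g, m) := t in Cmul c (tr_fm A g m a)) l)))
      <= K * s).
  { destruct Hsum as [K [HK0 HK]]. exists K. split; [exact HK0|].
    intros a s Hs. rewrite Hfa. apply HK, Hs. }
  clear Hfa. induction l as [|[[c g] m] l IH].
  - exists 0. split; [lra|]. intros a s _. simpl. rewrite Rabs_R0. lra.
  - destruct IH as [K [HK0 HK]]. { intros c' g' m' Hin. apply (Hl c'). right. exact Hin. }
    destruct (Hl c g m (or_introl eq_refl)) as [Hg Hm].
    destruct (tr_term_dominated c g m Hg Hm) as [K1 [HK1 Hterm]].
    exists (K1 + K). split; [lra|]. intros a s Hs.
    change (Rabs (re (Cmul c (tr_fm A g m a)) + re (Csum (map (fun t =>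
      let '(c, g, m) := t in Cmul c (tr_fm A g m a)) l))) <= (K1 + K) * s).
    eapply Rle_trans; [apply Rabs_triang|].
    pose proof (Rabs_re_le (Cmul c (tr_fm A g m a))).
    pose proof (Hterm a s Hs). pose proof (HK a s Hs). lra.
Qed.

End RightMultiplierNorm.

(** A sublinear functional [q] that is minimal
    (no sublinear functional lies strictly below it) is linear; Zorn's lemma
    yields a minimal sublinear functional below any given one, and choosing the
    starting functional to be negative at [-a] makes the result norm [a]. *)

Section Sublinear.
Variable A : BanachAlgebra.

Definition sublinear (q : A -> R) : Prop :=
  (forall x y, q (add A x y) <= q x + q y) /\
  (forall t x, 0 <= t -> q (rscal A t x) = t * q x).

Lemma sublinear_zero q : sublinear q -> q (zero A) = 0.
Proof. intros [_ Hh]. rewrite <- (rscal0 A (zero A)), Hh; lra. Qed.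

Lemma sublinear_lower q : sublinear q -> forall x, - q (rscal A (-1) x) <= q x.
Proof.
  intros Hq x. pose proof (sublinear_zero q Hq). destruct Hq as [Hs _].
  specialize (Hs x (rscal A (-1) x)). rewrite add_rscal_opp in Hs. lra.
Qed.

Lemma norm_sublinear : sublinear (norm A).
Proof.
  split; [apply norm_triangle|]. intros t x Ht. rewrite norm_rscal, Rabs_right; lra.
Qed.

Section Infimum.
Variables (I : Type) (i0 : I) (phi : I -> A -> R).
Hypothesis phi_bounded : forall x, exists b, forall i, b <= phi i x.
Hypothesis phi_subadd : forall i j x y, exists k, phi k (add A x y) <= phi i x + phi j y.
Hypothesis phi_homog : forall s i x, 0 < s -> exists j, phi j (rscal A s x) <= s * phi i x.
Hypothesis phi_zero : forall i, phi i (zero A) = 0.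

Let values (x : A) (r : R) : Prop := exists i, r = - phi i x.

Let values_bounded x : bound (values x).
Proof.
  destruct (phi_bounded x) as [b Hb]. exists (- b). intros r [i ->]. specialize (Hb i). lra.
Qed.

Let values_inhabited x : exists r, values x r.
Proof. exists (- phi i0 x), i0. reflexivity. Qed.

Definition inf_family (x : A) : R :=
  - proj1_sig (completeness (values x) (values_bounded x) (values_inhabited x)).

Lemma inf_family_le i x : inf_family x <= phi i x.
Proof.
  unfold inf_family. destruct completeness as [s [Hub Hlub]]; simpl.
  assert (- phi i x <= s) by (apply Hub; exists i; reflexivity). lra.
Qed.

Lemma le_inf_family x b : (forall i, b <= phi i x) -> b <= inf_family x.
Proof.
  intros Hb. unfold inf_family. destruct completeness as [s [Hub Hlub]]; simpl.
  assert (s <= - b) by (apply Hlub; intros r [i ->]; specialize (Hb i); lra). lra.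
Qed.

Lemma inf_family_sublinear : sublinear inf_family.
Proof.
  split.
  - intros x y.
    assert (Hx : forall j, inf_family (add A x y) - phi j y <= inf_family x).
    { intros j. apply le_inf_family. intros i. destruct (phi_subadd i j x y) as [k Hk].
      pose proof (inf_family_le k (add A x y)). lra. }
    assert (inf_family (add A x y) - inf_family x <= inf_family y).
    { apply le_inf_family. intros j. specialize (Hx j). lra. }
    lra.
  - intros s x Hs. destruct (Req_dec s 0) as [->|Hs0].
    + rewrite rscal0, Rmult_0_l. apply Rle_antisym.
      * rewrite <- (phi_zero i0). apply inf_family_le.
      * apply le_inf_family. intros i. rewrite phi_zero. lra.
    + apply Rle_antisym.
      * (* inf (s x) <= s phi i x for every i, hence inf (s x) / s <= inf x *)
        assert (Hdiv : inf_family (rscal A s x) * / s <= inf_family x).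
        { apply le_inf_family. intros i. destruct (phi_homog s i x) as [j Hj]; [lra|].
          pose proof (inf_family_le j (rscal A s x)).
          apply (Rmult_le_reg_l s); [lra|].
          replace (s * (inf_family (rscal A s x) * / s)) with (inf_family (rscal A s x))
            by (field; lra). lra. }
        apply (Rmult_le_compat_l s) in Hdiv; [|lra].
        replace (s * (inf_family (rscal A s x) * / s)) with (inf_family (rscal A s x))
          in Hdiv by (field; lra). exact Hdiv.
      * (* homogeneity with factor 1/s bounds phi i (s x) from below *)
        apply le_inf_family. intros i.
        destruct (phi_homog (/ s) i (rscal A s x)) as [j Hj];
          [apply Rinv_0_lt_compat; lra|].
        rewrite rscal_rscal, Rinv_l, rscal1 in Hj by lra.
        pose proof (inf_family_le j x).
        apply (Rmult_le_compat_l s) in Hj; [|lra].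
        replace (s * (/ s * phi i (rscal A s x))) with (phi i (rscal A s x)) in Hj
          by (field; lra). nra.
Qed.

End Infimum.

(** Given sublinear [q] and a vector [y], the functional
    [x |-> inf_(t >= 0) q (x + t y) - t q y] is sublinear, below [q], and at
    most [- q y] at [-y]. *)

Lemma sublinear_shift q y : sublinear q -> exists q', sublinear q' /\
  (forall x, q' x <= q x) /\ q' (rscal A (-1) y) <= - q y.
Proof.
  intros Hq. pose proof Hq as [Hs Hh].
  pose (phi (t : nonnegreal) x := q (add A x (rscal A t y)) - t * q y).
  pose (t0 := mknonnegreal 0 (Rle_refl 0)).
  assert (Hbounded : forall x, exists b, forall t, b <= phi t x).
  { intros x. exists (- q (rscal A (-1) x)). intros [t Ht]. unfold phi; simpl.
    pose proof (Hs (add A x (rscal A t y)) (rscal A (-1) x)) as E.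
    rewrite add_cancel_l, Hh in E by lra. lra. }
  assert (Hsubadd : forall i j x z, exists k, phi k (add A x z) <= phi i x + phi j z).
  { intros [t1 H1] [t2 H2] x z. exists (mknonnegreal (t1 + t2) ltac:(lra)).
    unfold phi; simpl. rewrite rscal_plus, add_swap4.
    pose proof (Hs (add A x (rscal A t1 y)) (add A z (rscal A t2 y))). lra. }
  assert (Hhomog : forall s i x, 0 < s -> exists j, phi j (rscal A s x) <= s * phi i x).
  { intros s [t Ht] x Hs0. exists (mknonnegreal (s * t) ltac:(nra)). unfold phi; simpl.
    rewrite <- rscal_rscal, <- rscal_add, Hh by lra. lra. }
  assert (Hzero : forall i, phi i (zero A) = 0).
  { intros [t Ht]. unfold phi; simpl. rewrite add_zero_l, Hh by lra. ring. }
  exists (inf_family nonnegreal t0 phi Hbounded). split; [|split].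
  - apply inf_family_sublinear; assumption.
  - intros x. eapply Rle_trans; [apply (inf_family_le _ _ _ _ t0)|].
    unfold phi; simpl. rewrite rscal0, add_zero. lra.
  - eapply Rle_trans; [apply (inf_family_le _ _ _ _ (mknonnegreal 1 ltac:(lra)))|].
    unfold phi; simpl. rewrite add_comm, rscal1, add_rscal_opp, sublinear_zero by exact Hq.
    lra.
Qed.

(** A nonempty chain of sublinear functionals below [q0] has a sublinear lower
    bound below [q0], namely its pointwise infimum. *)

Lemma sublinear_chain_bound (q0 : A -> R) (Ch : (A -> R) -> Prop) q1 : Ch q1 ->
  (forall q, Ch q -> sublinear q /\ forall x, q x <= q0 x) ->
  (forall q q', Ch q -> Ch q' -> (forall x, q x <= q' x) \/ (forall x, q' x <= q x)) ->
  exists m, sublinear m /\ (forall x, m x <= q0 x) /\ forall q, Ch q -> forall x, m x <= q x.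
Proof.
  intros Hq1 Hsub Htot.
  pose (I := {q : A -> R | Ch q}).
  pose (phi := fun (i : I) => proj1_sig i).
  assert (Hbounded : forall x, exists b, forall i, b <= phi i x).
  { intros x. exists (- q0 (rscal A (-1) x)). intros [q Hq]. unfold phi; simpl.
    destruct (Hsub q Hq) as [Hq' Hqq0].
    pose proof (sublinear_lower q Hq' x). pose proof (Hqq0 (rscal A (-1) x)). lra. }
  assert (Hsubadd : forall i j x y, exists k, phi k (add A x y) <= phi i x + phi j y).
  { intros [q Hq] [q' Hq'] x y. unfold phi; simpl.
    destruct (Hsub q Hq) as [[Hs _] _]. destruct (Hsub q' Hq') as [[Hs' _] _].
    destruct (Htot q q' Hq Hq') as [Hle|Hle].
    - exists (exist Ch q Hq). simpl. pose proof (Hs x y). pose proof (Hle y). lra.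
    - exists (exist Ch q' Hq'). simpl. pose proof (Hs' x y). pose proof (Hle x). lra. }
  assert (Hhomog : forall s i x, 0 < s -> exists j, phi j (rscal A s x) <= s * phi i x).
  { intros s [q Hq] x Hs. exists (exist Ch q Hq). unfold phi; simpl.
    rewrite (proj2 (proj1 (Hsub q Hq))) by lra. lra. }
  assert (Hzero : forall i, phi i (zero A) = 0).
  { intros [q Hq]. apply sublinear_zero, (Hsub q Hq). }
  set (i1 := exist Ch q1 Hq1 : I).
  exists (inf_family I i1 phi Hbounded). split; [|split].
  - apply inf_family_sublinear; assumption.
  - intros x. eapply Rle_trans; [apply (inf_family_le _ _ _ _ i1)|]. apply (Hsub q1 Hq1).
  - intros q Hq x. exact (inf_family_le _ _ _ _ (exist Ch q Hq) x).
Qed.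

Lemma minimal_sublinear (q0 : A -> R) : sublinear q0 ->
  exists u, sublinear u /\ (forall x, u x <= q0 x) /\
    forall q, sublinear q -> (forall x, q x <= u x) -> forall x, u x <= q x.
Proof.
  intros Hq0.
  pose (T := {q : A -> R | sublinear q /\ forall x, q x <= q0 x}).
  pose (below := fun (s t : T) => boolp.asbool (forall x, proj1_sig t x <= proj1_sig s x)).
  assert (top : T) by (exists q0; split; [exact Hq0|intros; lra]).
  destruct (@classical_sets.ZL_preorder T top below) as [[u [Hu Huq]] Hmax].
  - intros s. apply boolp.asboolT. intros; lra.
  - intros r s t H1 H2. apply boolp.asboolT. apply boolp.asboolW in H1, H2.
    intros x. specialize (H1 x). specialize (H2 x). lra.
  - intros Ch Htot.
    destruct (classic (exists s, Ch s)) as [[s0 Hs0]|Hempty].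
    2:{ exists top. intros s Hs. exfalso. apply Hempty. exists s. exact Hs. }
    pose (Chf := fun q => exists s : T, Ch s /\ proj1_sig s = q).
    destruct (sublinear_chain_bound q0 Chf (proj1_sig s0)) as [m [Hm [Hmq0 Hmle]]].
    + exists s0. split; [exact Hs0|reflexivity].
    + intros q [s [_ <-]]. exact (proj2_sig s).
    + intros q q' [s [Hs <-]] [s' [Hs' <-]].
      destruct (Htot s s' Hs Hs') as [H|H]; apply boolp.asboolW in H; [right|left]; exact H.
    + exists (exist _ m (conj Hm Hmq0)). intros s Hs. apply boolp.asboolT. simpl.
      apply Hmle. exists s. split; [exact Hs|reflexivity].
  - exists u. split; [exact Hu|split; [exact Huq|]].
    intros q Hq Hle x.
    assert (Hqq0 : forall x, q x <= q0 x) by (intros z; pose proof (Hle z); pose proof (Huq z); lra).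
    assert (Hbelow : is_true (below (exist _ u (conj Hu Huq)) (exist _ q (conj Hq Hqq0)))).
    { apply boolp.asboolT. exact Hle. }
    specialize (Hmax _ Hbelow). apply boolp.asboolW in Hmax. apply Hmax.
Qed.

(* A minimal sublinear functional is odd, hence additive and real-linear. *)
Lemma minimal_sublinear_linear u : sublinear u ->
  (forall q, sublinear q -> (forall x, q x <= u x) -> forall x, u x <= q x) ->
  (forall x y, u (add A x y) = u x + u y) /\ (forall t x, u (rscal A t x) = t * u x).
Proof.
  intros Hu Hmin.
  assert (Hodd : forall y, u (rscal A (-1) y) = - u y).
  { intros y. destruct (sublinear_shift u y Hu) as [q [Hq [Hqu Hqy]]].
    pose proof (Hmin q Hq Hqu (rscal A (-1) y)). pose proof (sublinear_lower u Hu y). lra. }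
  destruct Hu as [Hs Hh]. split.
  - intros x y. apply Rle_antisym; [apply Hs|].
    pose proof (Hs (rscal A (-1) x) (rscal A (-1) y)) as H.
    rewrite <- rscal_add, !Hodd in H. lra.
  - intros t x. destruct (Rle_dec 0 t) as [Ht|Ht]; [apply Hh; exact Ht|].
    replace t with (-1 * - t) by ring. rewrite <- rscal_rscal, Hodd, Hh by lra. ring.
Qed.

Lemma real_hahn_banach (a : A) : exists u : A -> R,
  (forall x y, u (add A x y) = u x + u y) /\ (forall t x, u (rscal A t x) = t * u x) /\
  (forall x, Rabs (u x) <= norm A x) /\ u a = norm A a.
Proof.
  destruct (sublinear_shift (norm A) a norm_sublinear) as [q0 [Hq0 [Hq0n Hq0a]]].
  destruct (minimal_sublinear q0 Hq0) as [u [Hu [Huq Hmin]]].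
  destruct (minimal_sublinear_linear u Hu Hmin) as [Hadd Hhom].
  assert (Hnorm_neg : forall x, norm A (rscal A (-1) x) = norm A x).
  { intros x. rewrite norm_rscal, Rabs_left by lra. ring. }
  exists u. split; [exact Hadd|split; [exact Hhom|split]].
  - intros x. apply Rabs_le. pose proof (Huq x). pose proof (Hq0n x).
    pose proof (Huq (rscal A (-1) x)). pose proof (Hq0n (rscal A (-1) x)).
    rewrite Hhom, Hnorm_neg in *. lra.
  - pose proof (Huq a). pose proof (Hq0n a). pose proof (Huq (rscal A (-1) a)).
    rewrite Hhom in *. lra.
Qed.

(** Complex Hahn-Banach (with constant 2): [x |-> u x - i u (i x)] is
    complex-linear, bounded by [2 ||x||], and has real part [||a||] at [a]. *)

Definition Ci : C := mkC 0 1.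

Lemma scal_decomp p q (x : A) : scal A (mkC p q) x = add A (rscal A p x) (rscal A q (scal A Ci x)).
Proof. unfold rscal. rewrite scal_assoc, <- scal_addl. f_equal. apply C_eq; simpl; ring. Qed.

Lemma scal_Ci_Ci (x : A) : scal A Ci (scal A Ci x) = rscal A (-1) x.
Proof. unfold rscal. rewrite scal_assoc. f_equal. apply C_eq; simpl; ring. Qed.

Lemma scal_Ci_rscal t (x : A) : scal A Ci (rscal A t x) = rscal A t (scal A Ci x).
Proof. unfold rscal. rewrite !scal_assoc. f_equal. apply C_eq; simpl; ring. Qed.

Lemma complex_hahn_banach (a : A) : exists h : A -> C, in_dual A h /\
  (forall x, Cmod (h x) <= 2 * norm A x) /\ re (h a) = norm A a.
Proof.
  destruct (real_hahn_banach a) as [u [Hadd [Hhom [Hb Ha]]]].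
  exists (fun x => mkC (u x) (- u (scal A Ci x))).
  assert (Hbound : forall x, Cmod (mkC (u x) (- u (scal A Ci x))) <= 2 * norm A x).
  { intros x. eapply Rle_trans; [apply Cmod_le_sum|]. simpl. rewrite Rabs_Ropp.
    assert (HCi : Cmod Ci = 1).
    { unfold Cmod, Ci; simpl. replace (0 * (0 * 1) + 1 * (1 * 1)) with 1 by ring. apply sqrt_1. }
    pose proof (Hb x). pose proof (Hb (scal A Ci x)). rewrite norm_scal, HCi in *. lra. }
  split; [split; [|split]|split].
  - intros x y. apply C_eq; simpl; [apply Hadd|]. rewrite scal_addr, Hadd. ring.
  - intros [p q] x. rewrite scal_decomp. apply C_eq; simpl.
    + rewrite Hadd, !Hhom. ring.
    + rewrite scal_addr, !scal_Ci_rscal, scal_Ci_Ci, Hadd, !Hhom. ring.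
  - exists 2. exact Hbound.
  - exact Hbound.
  - exact Ha.
Qed.

End Sublinear.

Lemma geometric_domination (t : nat -> R) c : (forall k, Rabs (t k) <= c * (/4) ^ k) ->
  ex_series t /\ Rabs (Series t) <= 4 / 3 * c.
Proof.
  intros Ht.
  assert (Hgeom : is_series (fun k => c * (/4) ^ k) (4 / 3 * c)).
  { replace (4 / 3 * c) with (c * / (1 - / 4)) by field.
    apply (is_series_scal_l (K := R_AbsRing) (V := R_NormedModule) c).
    apply is_series_geom. rewrite Rabs_right; lra. }
  assert (Habs : ex_series (fun k => Rabs (t k))).
  { apply (ex_series_le (fun k => Rabs (t k)) (fun k => c * (/4) ^ k)); [|eexists; exact Hgeom].
    intros k. change (Rabs (Rabs (t k)) <= c * (/4) ^ k). rewrite Rabs_Rabsolu. apply Ht. }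
  split.
  - apply (ex_series_le t (fun k => c * (/4) ^ k)); [apply Ht|eexists; exact Hgeom].
  - eapply Rle_trans; [apply Series_Rabs, Habs|].
    rewrite <- (is_series_unique _ _ Hgeom). apply Series_le; [|eexists; exact Hgeom].
    intros k. split; [apply Rabs_pos|apply Ht].
Qed.

(** Given vectors [a n] and functionals [h n] of norm at
    most 2 with [Re h n (a n) = ||a n||], the functional
    [hump = sum_n (+-) 4^-n h n], with signs chosen inductively so that the
    partial sums do not cancel the new term at [a n], satisfies
    [|Re hump (a n)| >= 4^-n ||a n|| / 3] for every [n]. *)

Section GlidingHump.
Variable A : BanachAlgebra.
Variable a : nat -> A.
Variable h : nat -> A -> C.
Hypothesis h_dual : forall n, in_dual A (h n).
Hypothesis h_bound : forall n x, Cmod (h n x) <= 2 * norm A x.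
Hypothesis h_norming : forall n, re (h n (a n)) = norm A (a n).

Definition Crscal (t : R) (z : C) : C := mkC (t * re z) (t * im z).

Definition weight (n : nat) : R := (/4) ^ n.

Lemma weight_pos n : 0 < weight n.
Proof. apply pow_lt. lra. Qed.

(* Partial sums of the series defining [hump]; the sign of the k-th term is
   that of the real part of the k-th partial sum at [a k]. *)
Fixpoint partial (n : nat) : A -> C :=
  match n with
  | O => fun _ => C0
  | S k => fun x => Cadd (partial k x)
      (Crscal (weight k * (if Rle_dec 0 (re (partial k (a k))) then 1 else -1)) (h k x))
  end.

Definition sign (k : nat) : R := if Rle_dec 0 (re (partial k (a k))) then 1 else -1.

Definition term (k : nat) (x : A) : C := Crscal (weight k * sign k) (h k x).

Lemma Rabs_sign k : Rabs (sign k) = 1.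
Proof. unfold sign. destruct Rle_dec; [apply Rabs_R1|]. rewrite Rabs_left; lra. Qed.

Lemma re_partial n x : re (partial (S n) x) = sum_f_R0 (fun k => re (term k x)) n.
Proof.
  induction n as [|n IH].
  - change (0 + re (term 0 x) = re (term 0 x)). ring.
  - change (re (partial (S n) x) + re (term (S n) x) =
            sum_f_R0 (fun k => re (term k x)) n + re (term (S n) x)).
    rewrite IH. reflexivity.
Qed.

Lemma term_bound k x :
  Rabs (re (term k x)) <= 2 * norm A x * weight k /\
  Rabs (im (term k x)) <= 2 * norm A x * weight k.
Proof.
  unfold term, Crscal; simpl. rewrite !Rabs_mult, Rabs_sign, (Rabs_right (weight k))
    by (left; apply weight_pos).
  pose proof (Rabs_re_le (h k x)). pose proof (Rabs_im_le (h k x)).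
  pose proof (h_bound k x). pose proof (weight_pos k). split; nra.
Qed.

Lemma re_terms_summable x : ex_series (fun k => re (term k x)) /\
  Rabs (Series (fun k => re (term k x))) <= 4 / 3 * (2 * norm A x).
Proof. apply geometric_domination. intros k. apply term_bound. Qed.

Lemma im_terms_summable x : ex_series (fun k => im (term k x)) /\
  Rabs (Series (fun k => im (term k x))) <= 4 / 3 * (2 * norm A x).
Proof. apply geometric_domination. intros k. apply term_bound. Qed.

Definition hump (x : A) : C :=
  mkC (Series (fun k => re (term k x))) (Series (fun k => im (term k x))).

(* Both component series converge geometrically, so [hump] is a bounded
   complex-linear functional. *)
Lemma hump_dual : in_dual A hump.
Proof.
  pose proof (fun x => proj1 (re_terms_summable x)) as Hre.
  pose proof (fun x => proj1 (im_terms_summable x)) as Him.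
  assert (Hc : forall (c : R) u, ex_series u -> ex_series (fun k => c * u k)).
  { intros c u Hu. apply (ex_series_scal_l (K := R_AbsRing) (V := R_NormedModule)), Hu. }
  split; [|split].
  - intros x y. apply C_eq; cbn [re im hump Cadd]; rewrite <- Series_plus by auto; apply Series_ext;
      intros k; unfold term, Crscal; simpl; rewrite (proj1 (h_dual k)); simpl; ring.
  - intros z x. apply C_eq; cbn [re im hump Cmul]; rewrite <- !Series_scal_l;
      [rewrite <- Series_minus by auto|rewrite <- Series_plus by auto];
      apply Series_ext; intros k; unfold term, Crscal; simpl;
      rewrite (proj1 (proj2 (h_dual k))); simpl; ring.
  - exists (2 * (4 / 3 * 2)). intros x. eapply Rle_trans; [apply Cmod_le_sum|].
    cbn [re im hump].
    pose proof (proj2 (re_terms_summable x)). pose proof (proj2 (im_terms_summable x)). lra.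
Qed.

(* The n-th term dominates: the earlier partial sum has the sign of the new
   term, and the tail after it is at most 2/3 of its size. *)
Lemma hump_large n : weight n * norm A (a n) / 3 <= Rabs (re (hump (a n))).
Proof.
  set (x := a n).
  assert (Htail : Rabs (Series (fun k => re (term (S n + k) x))) <=
                  4 / 3 * (2 * norm A x * weight (S n))).
  { apply geometric_domination. intros k. unfold weight. rewrite Rmult_assoc, <- pow_add.
    apply term_bound. }
  assert (Hsplit : re (hump x) = re (partial n x) + re (term n x) +
                                 Series (fun k => re (term (S n + k) x))).
  { cbn [re hump]. rewrite (Series_incr_n _ (S n)) by (auto with arith || apply re_terms_summable).
    change (Init.Nat.pred (S n)) with n. rewrite <- re_partial. reflexivity. }
  assert (Hterm : re (term n x) = weight n * sign n * norm A x).
  { unfold term, Crscal; simpl. unfold x. rewrite h_norming. reflexivity. }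
  assert (Hhead : weight n * norm A x <= Rabs (re (partial n x) + re (term n x))).
  { pose proof (weight_pos n). pose proof (norm_nonneg A x).
    rewrite Hterm. unfold sign. fold x. destruct Rle_dec.
    - rewrite Rabs_right; nra.
    - rewrite Rabs_left; nra. }
  replace (weight (S n)) with (/ 4 * weight n) in Htail by reflexivity.
  rewrite Hsplit.
  pose proof (Rabs_triang_inv (re (partial n x) + re (term n x))
                (- Series (fun k => re (term (S n + k) x)))) as Htri.
  rewrite Rabs_Ropp in Htri. unfold Rminus in Htri. rewrite Ropp_involutive in Htri. lra.
Qed.

End GlidingHump.

(** If no constant [c > 0] satisfies [c ||a|| <= ||a||_r],
    pick [a n] with [(n+1) ||a n||_r < 4^-n ||a n||] and norming functionals
    [h n]; the gliding hump [f] is in [A^*], so by the span hypothesis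
    [|Re f a| <= K ||a||_r], whence [(n+1)/3 < K] for every [n]. *)

Lemma rnorm_lower_bound (A : BanachAlgebra) : dual_spanned_by_tr A ->
  exists c, 0 < c /\ forall a s, is_rnorm A a s -> c * norm A a <= s.
Proof.
  intros Hsp. apply NNPP. intros Hno.
  assert (Hbad : forall n, exists p : A * R,
    is_rnorm A (fst p) (snd p) /\ INR (S n) * snd p < weight n * norm A (fst p)).
  { intros n. apply NNPP. intros Hn. apply Hno. exists (weight n / INR (S n)).
    pose proof (weight_pos n). pose proof (lt_0_INR (S n) (Nat.lt_0_succ n)).
    split; [apply Rdiv_lt_0_compat; assumption|].
    intros a s Hs. apply Rnot_lt_le. intros Hlt. apply Hn. exists (a, s). simpl.
    split; [exact Hs|]. apply (Rmult_lt_compat_l (INR (S n))) in Hlt; [|assumption].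
    replace (INR (S n) * (weight n / INR (S n) * norm A a)) with (weight n * norm A a)
      in Hlt by (field; lra). exact Hlt. }
  destruct (choice _ Hbad) as [p Hp].
  destruct (choice _ (fun n => complex_hahn_banach A (fst (p n)))) as [h Hh].
  set (a n := fst (p n)).
  pose proof (hump_dual A a h (fun n => proj1 (Hh n)) (fun n => proj1 (proj2 (Hh n))))
    as Hf.
  destruct (span_dominated_by_rnorm A Hsp _ Hf) as [K [HK0 HK]].
  destruct (INR_unbounded (3 * K)) as [N HN].
  destruct (Hp N) as [Hr Hlt]. fold (a N) in Hr, Hlt.
  pose proof (hump_large A a h (fun n => proj1 (proj2 (Hh n)))
                (fun n => proj2 (proj2 (Hh n))) N) as Hlarge.
  pose proof (HK _ _ Hr) as Hdom.
  pose proof (rnorm_nonneg A _ _ Hr).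
  set (e := weight N * norm A (a N)) in *.
  set (s := snd (p N)) in *.
  assert (He : 0 < e) by (pose proof (pos_INR (S N)); nra).
  (* (N+1) e / 3 <= (N+1) K s < K e, so N < N+1 < 3K *)
  assert (INR (S N) * (e / 3) < K * e).
  { pose proof (pos_INR (S N)). assert (INR (S N) * (e / 3) <= INR (S N) * (K * s)) by nra.
    nra. }
  rewrite S_INR in *. nra.
Qed.

Lemma rnorm_equivalent (A : BanachAlgebra) : dual_spanned_by_tr A ->
  exists c K, 0 < c /\ 0 < K /\
    forall a : A, exists s, is_rnorm A a s /\ c * norm A a <= s /\ s <= K * norm A a.
Proof.
  intros Hsp. destruct (rnorm_lower_bound A Hsp) as [c [Hc Hlb]].
  exists c, 1. split; [exact Hc|split; [lra|]].
  intros a. destruct (rnorm_exists A a) as [s Hs]. exists s. split; [exact Hs|split].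
  - apply Hlb; exact Hs.
  - pose proof (rnorm_le_norm A a s Hs). lra.
Qed.

(** The opposite algebra exchanges left and right: its right multiplier norm is
    the left multiplier norm of [A], and [A^** sq A^*] becomes [A^* tr A^**]. *)

Definition opposite (A : BanachAlgebra) : BanachAlgebra.
Proof.
  refine (@Build_BanachAlgebra (car A) (add A) (zero A) (opp A) (scal A)
    (fun a b => mul A b a) (norm A) (add_assoc A) (add_comm A) (add_zero A) (add_opp A)
    (scal_one A) (scal_assoc A) (scal_addl A) (scal_addr A) _ _ _ _ _
    (norm_nonneg A) (norm_eq0 A) (norm_triangle A) (norm_scal A) _ (complete A)).
  - intros a b c. symmetry. apply mul_assoc.
  - intros a b c. apply mul_addr.
  - intros a b c. apply mul_addl.
  - intros z a b. apply mul_scalr.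
  - intros z a b. apply mul_scall.
  - intros a b. rewrite Rmult_comm. apply norm_submult.
Defined.

Lemma spanned_by_sq_opposite (A : BanachAlgebra) :
  dual_spanned_by_sq A -> dual_spanned_by_tr (opposite A).
Proof.
  intros Hsp f Hf. destruct (Hsp f Hf) as [l [Hl Hfa]].
  exists (map (fun t => let '(c, m, g) := t in (c, g, m)) l). split.
  - intros c g m Hin. apply in_map_iff in Hin. destruct Hin as [[[c' m'] g'] [E Hin]].
    injection E as -> -> ->. destruct (Hl _ _ _ Hin). split; assumption.
  - intros a. rewrite (Hfa a), map_map. f_equal. apply map_ext. intros [[c m] g]. reflexivity.
Qed.

Theorem corollary1 (A : BanachAlgebra) :
  (right_faithful A -> dual_spanned_by_tr A ->
     exists c K, 0 < c /\ 0 < K /\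
       forall a : A, exists s, is_rnorm A a s /\
         c * norm A a <= s /\ s <= K * norm A a) /\
  (left_faithful A -> dual_spanned_by_sq A ->
     exists c K, 0 < c /\ 0 < K /\
       forall a : A, exists s, is_lnorm A a s /\
         c * norm A a <= s /\ s <= K * norm A a).
Proof.
  split.
  - intros _ Hsp. exact (rnorm_equivalent A Hsp).
  - intros _ Hsp. exact (rnorm_equivalent (opposite A) (spanned_by_sq_opposite A Hsp)).
Qed.
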